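(* Fix $K>0$ and $z\in\mathbb{C}$, and assume $b_n\ge m\ge m_0$ for a sufficiently large constant $m_0$. For all sufficiently large $n$ (depending on $K$) the following holds on the event $\mathcal{E}_K$: for every unit vector $v\in\mathbb{C}^n$ with $\|X_z v\|\le b_n^{-10m}m^{-1/2}$, and for every $i\in[m-1]$, either $\|v_{[i]}\|\ge b_n^{-10m}m^{-1/2}$ or $\|v_{[i+1]}\|\ge b_n^{-10m}m^{-1/2}$.
   Context: Let $b_n$ divide $n$, $m=n/b_n$, $c_n=3b_n$. Let $\tilde D_i,\tilde U_i,\tilde T_i$ ($i\in[m]$) be $b_n\times b_n$ matrices, $D_i=\tilde D_i/\sqrt{c_n}$, $U_i=\tilde U_i/\sqrt{c_n}$, $T_i=\tilde T_i/\sqrt{c_n}$, $(D_i)_z=D_i-zI_{b_n}$. Let $X$ be the $n\times n$ block matrix ($m\times m$ blocks of size $b_n$, block indices modulo $m$) with $(i,i)$ block $D_i$, $(i,i-1)$ block $T_{i-1}$, $(i,i+1)$ block $U_{i+1}$, other blocks zero, and $X_z=X-zI$. $\mathcal{E}_K$ is the event that for all $i\in[m]$: $\|U_i\|,\|(D_i)_z\|,\|T_i\|\le K$ and the smallest singular values satisfy $s_{b_n}(U_i),s_{b_n}(T_i)\ge b_n^{-5}$. For $v\in\mathbb{C}^n$, $v_{[1]},\dots,v_{[m]}\in\mathbb{C}^{b_n}$ are the consecutive blocks of $b_n$ coordinates of $v$. *)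

From HB Require Import structures.
From mathcomp Require Import all_boot all_order all_algebra.
From mathcomp Require Import classical_sets reals.
From mathcomp Require Import complex.
Set Implicit Arguments. Unset Strict Implicit. Unset Printing Implicit Defensive.
Import Order.TTheory GRing.Theory Num.Theory.
Local Open Scope ring_scope.
Local Open Scope classical_set_scope.

Section Defs.
Variable R : realType.
Local Notation C := R[i].

Definition cabs2 (x : C) : R := (complex.Re x) ^+ 2 + (complex.Im x) ^+ 2.

Definition vnorm k (v : 'cV[C]_k) : R := Num.sqrt (\sum_(r < k) cabs2 (v r 0)).

Definition opnorm k (A : 'M[C]_k) : R :=
  sup [set vnorm (A *m x) | x in [set x : 'cV[C]_k | vnorm x = 1]].

Definition smin k (A : 'M[C]_k) : R :=
  inf [set vnorm (A *m x) | x in [set x : 'cV[C]_k | vnorm x = 1]].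

(* entry (p,q) of a b x b matrix, for p, q < b (0 if b = 0) *)
Definition bentry b (A : 'M[C]_b) (p q : nat) : C :=
  match b return 'M[C]_b -> C with
  | 0 => fun _ => 0
  | b'.+1 => fun A => A (inord p) (inord q)
  end A.

(* The n x n block matrix X, n = b * m, blocks of size b, block indices
   0..m-1 (0-based version of [m]) taken modulo m:
   block (i,i) = D i, block (i,i-1) = T (i-1), block (i,i+1) = U (i+1). *)
Definition Xmat (b m n : nat) (D T U : nat -> 'M[C]_b) : 'M[C]_n :=
  \matrix_(r < n, c < n)
    let i := (r %/ b)%N in let j := (c %/ b)%N in
    let p := (r %% b)%N in let q := (c %% b)%N in
    (if j == i then bentry (D j) p q else 0)
    + (if j == ((i + m - 1) %% m)%N then bentry (T j) p q else 0)
    + (if j == ((i + 1) %% m)%N then bentry (U j) p q else 0).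

Definition event_EK (b m : nat) (K : R) (z : C) (D T U : nat -> 'M[C]_b) : Prop :=
  forall i, (i < m)%N ->
    [/\ opnorm (U i) <= K, opnorm (D i - z%:M) <= K, opnorm (T i) <= K,
        smin (U i) >= (b%:R) ^- 5 & smin (T i) >= (b%:R) ^- 5].

Definition blocknorm (b n : nat) (v : 'cV[C]_n) (i : nat) : R :=
  Num.sqrt (\sum_(r < n | (r %/ b)%N == i) cabs2 (v r 0)).

End Defs.

From mathcomp Require Import all_boot all_order all_algebra.
From mathcomp Require Import classical_sets reals.
From mathcomp Require Import complex.
From mathcomp Require Import ring lra zify.
Set Implicit Arguments. Unset Strict Implicit. Unset Printing Implicit Defensive.
Import Order.TTheory GRing.Theory Num.Theory.
Local Open Scope ring_scope.

(* Suppose both v_[i] and v_[i+1] were shorter than eps.  Block row k of X_z v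
   reads  T_(k-1) v_[k-1] + (D_k - z) v_[k] + U_(k+1) v_[k+1] = (X_z v)_[k],  a
   three-term recurrence that can be solved forwards for v_[k+1] (s(U) >= b^-5)
   or backwards for v_[k-1] (s(T) >= b^-5).  Each step multiplies the squared
   block norms by at most L = 3 (1 + 2 K^2) b^10, so every block has squared norm
   at most eps^2 L^m, and ||v||^2 <= m eps^2 L^m = (L / b^20)^m < 1 as soon as
   b > 3 (1 + 2 K^2), contradicting ||v|| = 1. *)

Section EuclideanNorm.
Variable R : realType.
Local Notation C := R[i].

Lemma cabs2_ge0 (x : C) : 0 <= cabs2 x.
Proof. by rewrite /cabs2 addr_ge0 ?sqr_ge0. Qed.

Lemma cabs2M (x y : C) : cabs2 (x * y) = cabs2 x * cabs2 y.
Proof. by case: x => a b; case: y => c d; rewrite /cabs2 /=; ring. Qed.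

Lemma cabs2N (x : C) : cabs2 (- x) = cabs2 x.
Proof. by case: x => a b; rewrite /cabs2 /= !sqrrN. Qed.

Lemma cabs2R (c : R) : cabs2 c%:C%C = c ^+ 2.
Proof. by rewrite /cabs2 /=; ring. Qed.

Lemma cabs2_eq0 (x : C) : cabs2 x = 0 -> x = 0.
Proof.
case: x => a b; rewrite /cabs2 /= => h.
by have [-> ->] : a = 0 /\ b = 0 by split; nra.
Qed.

Lemma cabs2D_le (x y : C) : cabs2 (x + y) <= 2 * (cabs2 x + cabs2 y).
Proof.
case: x => a b; case: y => c d; rewrite /cabs2 /=.
have := sqr_ge0 (a - c); have := sqr_ge0 (b - d); nra.
Qed.

Lemma cabs2D3_le (x y w : C) :
  cabs2 (x + y + w) <= 3 * (cabs2 x + cabs2 y + cabs2 w).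
Proof.
case: x => a1 a2; case: y => b1 b2; case: w => c1 c2; rewrite /cabs2 /=.
have := sqr_ge0 (a1 - b1); have := sqr_ge0 (a1 - c1); have := sqr_ge0 (b1 - c1).
have := sqr_ge0 (a2 - b2); have := sqr_ge0 (a2 - c2); have := sqr_ge0 (b2 - c2).
nra.
Qed.

Lemma cabs2_sum_le k (F : 'I_k -> C) :
  cabs2 (\sum_i F i) <= 2 ^+ k * \sum_i cabs2 (F i).
Proof.
elim: k F => [|k IH] F; first by rewrite !big_ord0 mulr0 /cabs2 /= expr0n addr0.
rewrite !big_ord_recr exprS -mulrA; apply: le_trans (cabs2D_le _ _) _.
rewrite ler_pM2l // mulrDr lerD ?IH // ler_peMl ?cabs2_ge0 //.
by rewrite exprn_ege1 ?ler1n.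
Qed.

Lemma vnorm_ge0 k (y : 'cV[C]_k) : 0 <= vnorm y.
Proof. exact: sqrtr_ge0. Qed.

Lemma vnorm_sqr k (y : 'cV[C]_k) : vnorm y ^+ 2 = \sum_q cabs2 (y q 0).
Proof. by rewrite sqr_sqrtr // sumr_ge0 // => q _; exact: cabs2_ge0. Qed.

Lemma vnorm_eq0 k (y : 'cV[C]_k) : vnorm y = 0 -> y = 0.
Proof.
move=> y0; have /psumr_eq0P y0E : \sum_q cabs2 (y q 0) = 0.
  by rewrite -vnorm_sqr y0 expr0n.
apply/matrixP => p q; rewrite ord1 mxE; apply: cabs2_eq0; apply: y0E => // *.
exact: cabs2_ge0.
Qed.

Lemma vnorm0 k : vnorm (0 : 'cV[C]_k) = 0.
Proof. by rewrite /vnorm big1 ?sqrtr0 // => q _; rewrite mxE /cabs2 /= expr0n addr0. Qed.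

Lemma vnormN k (y : 'cV[C]_k) : vnorm (- y) = vnorm y.
Proof. by rewrite /vnorm; congr Num.sqrt; apply: eq_bigr => q _; rewrite mxE cabs2N. Qed.

Lemma vnormZ k (c : R) (y : 'cV[C]_k) : 0 <= c -> vnorm (c%:C%C *: y) = c * vnorm y.
Proof.
move=> c0; rewrite /vnorm -[c in RHS](ger0_norm c0) -sqrtr_sqr -sqrtrM ?sqr_ge0 //.
by rewrite mulr_sumr; congr Num.sqrt; apply: eq_bigr => q _; rewrite mxE cabs2M cabs2R.
Qed.

Lemma vnormD3_sqr_le k (x y w : 'cV[C]_k) :
  vnorm (x + y + w) ^+ 2 <= 3 * (vnorm x ^+ 2 + vnorm y ^+ 2 + vnorm w ^+ 2).
Proof.
rewrite !vnorm_sqr -!big_split mulr_sumr; apply: ler_sum => q _.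
by rewrite !mxE cabs2D3_le.
Qed.

Lemma cabs2_entry_le k (x : 'cV[C]_k) q : cabs2 (x q 0) <= vnorm x ^+ 2.
Proof. by rewrite vnorm_sqr (bigD1 q) //= lerDl sumr_ge0 // => *; exact: cabs2_ge0. Qed.

Lemma vnorm_normalize k (x : 'cV[C]_k) : vnorm x != 0 ->
  exists2 u : 'cV[C]_k, vnorm u = 1 & x = (vnorm x)%:C%C *: u.
Proof.
move=> x0; exists ((vnorm x)^-1%:C%C *: x).
  by rewrite vnormZ ?invr_ge0 ?vnorm_ge0 // mulVf.
by rewrite scalerA -rmorphM mulfV // scale1r.
Qed.

End EuclideanNorm.

Section SingularValues.
Variable R : realType.
Local Notation C := R[i].
Variables (k : nat) (A : 'M[C]_k).

Lemma opnorm_set_ubound :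
  has_ubound [set vnorm (A *m x) | x in [set x : 'cV[C]_k | vnorm x = 1]]%classic.
Proof.
exists (Num.sqrt (\sum_p 2 ^+ k * \sum_q cabs2 (A p q))) => _ [x /= x1 <-].
rewrite ler_sqrt; last first.
  apply: sumr_ge0 => p _; apply: mulr_ge0; first exact: exprn_ge0.
  by apply: sumr_ge0 => q _; exact: cabs2_ge0.
apply: ler_sum => p _; rewrite mxE; apply: le_trans (cabs2_sum_le _) _.
rewrite ler_wpM2l ?exprn_ge0 // ler_sum // => q _; rewrite cabs2M ler_piMr ?cabs2_ge0 //.
by rewrite -(expr1n _ 2) -x1 cabs2_entry_le.
Qed.

Lemma opnorm_mulmx_le x : vnorm (A *m x) <= opnorm A * vnorm x.
Proof.
have [x0|x0] := eqVneq (vnorm x) 0; first by rewrite x0 (vnorm_eq0 x0) mulmx0 vnorm0 mulr0.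
have [u u1 ->] := vnorm_normalize x0.
rewrite -scalemxAr !vnormZ ?vnorm_ge0 // u1 mulr1 mulrC ler_wpM2r ?vnorm_ge0 //.
by apply: ub_le_sup; [exact: opnorm_set_ubound | exists u].
Qed.

Lemma smin_mulmx_le x : smin A * vnorm x <= vnorm (A *m x).
Proof.
have [x0|x0] := eqVneq (vnorm x) 0; first by rewrite x0 mulr0 vnorm_ge0.
have [u u1 ->] := vnorm_normalize x0.
rewrite -scalemxAr !vnormZ ?vnorm_ge0 // u1 mulr1 mulrC ler_wpM2l ?vnorm_ge0 //.
apply: ge_inf; last by exists u.
by exists 0 => _ [y _ <-]; exact: vnorm_ge0.
Qed.

End SingularValues.

Lemma divn_eq_range (b j r : nat) : (0 < b)%N ->
  ((r %/ b)%N == j) = (j * b <= r < j * b + b)%N.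
Proof. by move=> b0; rewrite eqn_leq leq_divRL // -ltnS ltn_divLR // mulSnr andbC. Qed.

Lemma sum_block (V : nmodType) (n b j : nat) (g : nat -> V) : (0 < b)%N ->
  (j.+1 * b <= n)%N ->
  \sum_(r < n | (r %/ b)%N == j) g r = \sum_(q < b) g (j * b + q)%N.
Proof.
move=> b0 jbn; have -> : \sum_(q < b) g (j * b + q)%N = \sum_(j * b <= r < j * b + b) g r.
  rewrite -{2}[(j * b)%N]add0n big_addn addKn big_mkord.
  by apply: eq_bigr => q _; rewrite addnC.
have jbn' : (j * b + b <= n)%N by rewrite -mulSnr.
rewrite (big_nat_widen _ _ _ _ _ jbn') big_geq_mkord.
by apply: eq_bigl => r; rewrite divn_eq_range // andbC.
Qed.

Section Blocks.
Variable R : realType.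
Local Notation C := R[i].

Definition ventry k (y : 'cV[C]_k) (p : nat) : C :=
  match k return 'cV[C]_k -> C with 0 => fun _ => 0 | k'.+1 => fun y => y (inord p) 0 end y.

Definition vblock b n (v : 'cV[C]_n) (j : nat) : 'cV[C]_b :=
  \col_(q < b) ventry v (j * b + q).

Lemma ventryE k (y : 'cV[C]_k) (p : 'I_k) : ventry y p = y p 0.
Proof. by case: k y p => [|k] y p; [case: p | rewrite /= inord_val]. Qed.

Lemma ventry_ord k (y : 'cV[C]_k) p (lt_pk : (p < k)%N) : ventry y p = y (Ordinal lt_pk) 0.
Proof. exact: (ventryE y (Ordinal lt_pk)). Qed.

Lemma bentryE k (A : 'M[C]_k) (p q : 'I_k) : bentry A p q = A p q.
Proof. by case: k A p q => [|k] A p q; [case: p | rewrite /= !inord_val]. Qed.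

Variables (b n : nat).
Hypothesis b_gt0 : (0 < b)%N.

Lemma blocknormE (v : 'cV[C]_n) j : (j.+1 * b <= n)%N ->
  blocknorm b v j = vnorm (vblock b v j).
Proof.
move=> jbn; rewrite /blocknorm /vnorm; congr Num.sqrt.
rewrite (eq_bigr (fun r : 'I_n => cabs2 (ventry v r))) => [|r _]; last by rewrite ventryE.
by rewrite (sum_block (fun r => cabs2 (ventry v r))) //; apply: eq_bigr => q _; rewrite mxE.
Qed.

Lemma blocknorm_ge0 (v : 'cV[C]_n) j : 0 <= blocknorm b v j.
Proof. exact: sqrtr_ge0. Qed.

Lemma blocknorm_le_vnorm (v : 'cV[C]_n) j : blocknorm b v j <= vnorm v.
Proof.
rewrite ler_sqrt; last by apply: sumr_ge0 => r _; exact: cabs2_ge0.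
by rewrite big_mkcond ler_sum // => r _; case: ifP => // _; exact: cabs2_ge0.
Qed.

Lemma vnorm_sqr_blocks m (v : 'cV[C]_n) : n = (m * b)%N ->
  vnorm v ^+ 2 = \sum_(j < m) blocknorm b v j ^+ 2.
Proof.
move=> nE; have blk_lt (r : 'I_n) : (r %/ b < m)%N by rewrite ltn_divLR // -nE.
rewrite vnorm_sqr (partition_big (fun r : 'I_n => Ordinal (blk_lt r)) xpredT) //=.
apply: eq_bigr => j _; rewrite sqr_sqrtr //; apply: sumr_ge0 => r _; exact: cabs2_ge0.
Qed.

Lemma sum_mul_vblock (M : 'M[C]_b) (v : 'cV[C]_n) j (q : 'I_b) : (j.+1 * b <= n)%N ->
  \sum_(p < b) M q p * vblock b v j p 0 =
  \sum_(c < n | (c %/ b)%N == j) bentry M q (c %% b)%N * ventry v c.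
Proof.
move=> jbn; rewrite (sum_block (fun c => bentry M q (c %% b)%N * ventry v c)) //.
by apply: eq_bigr => p _; rewrite mxE modnMDl modn_small // bentryE.
Qed.

Lemma mul_if_bentry (M : nat -> 'M[C]_b) (j i p q : nat) (x : C) :
  (if j == i then bentry (M j) p q else 0) * x = if j == i then bentry (M i) p q * x else 0.
Proof. by case: eqP => [->|]; rewrite ?mul0r. Qed.

Lemma vblock_Xmat_row m (D T U : nat -> 'M[C]_b) (z : C) (v : 'cV[C]_n) k :
  n = (m * b)%N -> (k.+3 <= m)%N ->
  vblock b ((Xmat m n D T U - z%:M) *m v) k.+1 =
  T k *m vblock b v k + (D k.+1 - z%:M) *m vblock b v k.+1 + U k.+2 *m vblock b v k.+2.
Proof.
move=> nE km; have bn j : (j <= k.+2)%N -> (j.+1 * b <= n)%N.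
  by move=> jk; rewrite nE leq_mul2r (leq_trans _ km) ?orbT.
rewrite !mulmxBl !mul_scalar_mx; apply/matrixP => q i; rewrite ord1 {i}.
have rn : (k.+1 * b + q < n)%N.
  by rewrite (leq_trans _ (bn k.+1 _)) // [(k.+2 * b)%N]mulSnr ltn_add2l.
have rdiv : ((k.+1 * b + q) %/ b)%N = k.+1 by rewrite divnMDl // divn_small // addn0.
have rmod : ((k.+1 * b + q) %% b)%N = q by rewrite modnMDl modn_small.
have prev : ((k.+1 + m - 1) %% m)%N = k.
  by rewrite (_ : k.+1 + m - 1 = k + m)%N ?modnDr ?modn_small; lia.
have next : ((k.+1 + 1) %% m)%N = k.+2 by rewrite addn1 modn_small.
rewrite mxE (ventry_ord _ rn) !mxE -(ventry_ord _ rn) !sum_mul_vblock ?bn // ?leqW //.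
rewrite (eq_bigr (fun c : 'I_n =>
     (if (c %/ b)%N == k.+1 then bentry (D k.+1) q (c %% b)%N * ventry v c else 0)
   + (if (c %/ b)%N == k then bentry (T k) q (c %% b)%N * ventry v c else 0)
   + (if (c %/ b)%N == k.+2 then bentry (U k.+2) q (c %% b)%N * ventry v c else 0))).
  by rewrite !big_split /= -!big_mkcond; ring.
by move=> c _; rewrite !mxE /= rdiv rmod prev next ventryE !mulrDl !mul_if_bentry.
Qed.

End Blocks.

Section Transfer.
Variable R : realType.
Local Notation C := R[i].

Lemma vnorm_sqr_le_transfer b (A B M : 'M[C]_b) (x y y' w : 'cV[C]_b) (K s e : R) :
  w = A *m x + B *m y + M *m y' -> vnorm w <= e ->
  opnorm A <= K -> opnorm B <= K -> 0 < s -> s <= smin M ->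
  vnorm y' ^+ 2 <=
    3 * (1 + 2 * K ^+ 2) * s ^- 2 * Num.max (e ^+ 2) (Num.max (vnorm x ^+ 2) (vnorm y ^+ 2)).
Proof.
move=> wE we AK BK s_gt0 sM.
set mu := Num.max _ _.
have [e_mu x_mu y_mu] : [/\ e ^+ 2 <= mu, vnorm x ^+ 2 <= mu & vnorm y ^+ 2 <= mu].
  by rewrite !le_max !lexx !orbT.
have sqr_le (a c : R) : 0 <= a -> a <= c -> a ^+ 2 <= c ^+ 2.
  by move=> a0 ac; apply: lerXn2r => //; rewrite nnegrE (le_trans a0 ac).
have mulK (N : 'M[C]_b) u : opnorm N <= K -> vnorm (N *m u) ^+ 2 <= K ^+ 2 * vnorm u ^+ 2.
  move=> NK; rewrite -exprMn sqr_le ?vnorm_ge0 //.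
  by rewrite (le_trans (opnorm_mulmx_le N u)) // ler_wpM2r ?vnorm_ge0.
have My : M *m y' = w + - (A *m x) + - (B *m y).
  by rewrite wE addrAC [A *m x + B *m y + _]addrAC addrK [A *m x + _]addrC addrK.
have key : (s * vnorm y') ^+ 2 <= 3 * (1 + 2 * K ^+ 2) * mu.
  apply: (@le_trans _ _ (vnorm (M *m y') ^+ 2)).
    apply: sqr_le; first by rewrite mulr_ge0 ?vnorm_ge0 ?ltW.
    by apply: le_trans (smin_mulmx_le M y'); rewrite ler_wpM2r ?vnorm_ge0.
  rewrite My; apply: le_trans (vnormD3_sqr_le _ _ _) _; rewrite !vnormN -mulrA ler_wpM2l //.
  have := mulK A x AK; have := mulK B y BK; have := sqr_le _ _ (vnorm_ge0 w) we.
  have := ler_wpM2l (sqr_ge0 K) x_mu; have := ler_wpM2l (sqr_ge0 K) y_mu; lra.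
have -> : vnorm y' ^+ 2 = (s * vnorm y') ^+ 2 / s ^+ 2.
  by rewrite exprMn mulrAC mulfV ?mul1r // expf_neq0 // gt_eqF.
by rewrite [leRHS]mulrAC ler_wpM2r // invr_ge0 exprn_ge0 // ltW.
Qed.

End Transfer.

Lemma geometric_growth (R : realFieldType) (s : nat -> R) (e L : R) (J : nat) :
  0 <= e -> 1 <= L -> s 0%N <= e -> s 1%N <= e ->
  (forall j, (j.+2 <= J)%N -> s j.+2 <= L * Num.max e (Num.max (s j) (s j.+1))) ->
  forall j, (j <= J)%N -> s j <= e * L ^+ j.
Proof.
move=> e0 L1 s0 s1 sS.
have mono i j : (i <= j)%N -> e * L ^+ i <= e * L ^+ j.
  by move=> ij; rewrite ler_wpM2l // ler_weXn2l.
have eL j : e <= e * L ^+ j by rewrite ler_peMr // exprn_ege1.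
have pair j : (j.+1 <= J)%N -> s j <= e * L ^+ j /\ s j.+1 <= e * L ^+ j.+1.
  elim: j => [|j IH] jJ.
    by rewrite expr0 mulr1 s0 (le_trans s1).
  have [sj sj1] := IH (ltnW jJ); split=> //.
  rewrite (le_trans (sS j jJ)) // exprS mulrCA ler_wpM2l ?(le_trans ler01 L1) //.
  by rewrite !ge_max eL sj1 (le_trans sj) ?mono.
by case=> [|j] jJ; [rewrite expr0 mulr1 | have [] := pair j jJ].
Qed.

Definition growth_factor (R : numFieldType) (K : R) (b : nat) : R :=
  3 * (1 + 2 * K ^+ 2) * b%:R ^+ 10.

Lemma growth_factorE (R : numFieldType) (K : R) (b : nat) :
  growth_factor K b = 3 * (1 + 2 * K ^+ 2) * (b%:R ^- 5) ^- 2.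
Proof. by rewrite /growth_factor exprVn invrK -exprM. Qed.

Lemma growth_factor_ge1 (R : realFieldType) (K : R) (b : nat) :
  (0 < b)%N -> 1 <= growth_factor K b.
Proof.
move=> b_gt0; apply: mulr_ege1; last by rewrite exprn_ege1 // ler1n.
by have := sqr_ge0 K; lra.
Qed.

Section ResidualPropagation.
Variable R : realType.
Local Notation C := R[i].
Variables (b m n : nat) (D T U : nat -> 'M[C]_b) (z : C) (K r : R) (v : 'cV[C]_n).
Hypotheses (b_gt0 : (0 < b)%N) (nE : n = (m * b)%N) (EK : event_EK m K z D T U).
Hypothesis residual_le : vnorm ((Xmat m n D T U - z%:M) *m v) <= r.

Local Notation bn := (blocknorm b v).
Local Notation L := (growth_factor K b).

Let block_le j : (j < m)%N -> (j.+1 * b <= n)%N.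
Proof. by move=> jm; rewrite nE leq_mul2r jm orbT. Qed.

Let residual_block_le j : (j < m)%N ->
  vnorm (vblock b ((Xmat m n D T U - z%:M) *m v) j) <= r.
Proof.
by move=> jm; rewrite -blocknormE ?block_le // (le_trans (blocknorm_le_vnorm _ _ _)).
Qed.

Let scale_gt0 : 0 < b%:R ^- 5 :> R.
Proof. by rewrite invr_gt0 exprn_gt0 // ltr0n. Qed.

Lemma blocknorm_growth_up k : (k.+3 <= m)%N ->
  bn k.+2 ^+ 2 <= L * Num.max (r ^+ 2) (Num.max (bn k ^+ 2) (bn k.+1 ^+ 2)).
Proof.
move=> km; have [_ Dk1 _ _ _] := EK (ltnW km).
have [_ _ _ Uk2 _] := EK km; have [_ _ Tk _ _] := EK (ltnW (ltnW km)).
rewrite !blocknormE ?block_le ?(ltnW km) ?(ltnW (ltnW km)) // growth_factorE.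
apply: vnorm_sqr_le_transfer (vblock_Xmat_row b_gt0 D T U z v nE km) _ Tk Dk1 scale_gt0 Uk2.
exact: residual_block_le (ltnW km).
Qed.

Lemma blocknorm_growth_down k : (k.+3 <= m)%N ->
  bn k ^+ 2 <= L * Num.max (r ^+ 2) (Num.max (bn k.+1 ^+ 2) (bn k.+2 ^+ 2)).
Proof.
move=> km; have [_ Dk1 _ _ _] := EK (ltnW km).
have [Uk2 _ _ _ _] := EK km; have [_ _ _ _ Tk] := EK (ltnW (ltnW km)).
rewrite !blocknormE ?block_le ?(ltnW km) ?(ltnW (ltnW km)) // growth_factorE.
have row : vblock b ((Xmat m n D T U - z%:M) *m v) k.+1 =
    (D k.+1 - z%:M) *m vblock b v k.+1 + U k.+2 *m vblock b v k.+2 + T k *m vblock b v k.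
  by rewrite (vblock_Xmat_row b_gt0 D T U z v nE km) -addrA addrC.
apply: vnorm_sqr_le_transfer row _ Dk1 Uk2 scale_gt0 Tk.
exact: residual_block_le (ltnW km).
Qed.

Section SmallPair.
Variable i : nat.
Hypotheses (im : (i.+1 < m)%N) (bi : bn i <= r) (bi1 : bn i.+1 <= r).

Let sqr_le_r j : bn j <= r -> bn j ^+ 2 <= r ^+ 2.
Proof.
move=> bj; have bj0 : 0 <= bn j by apply: blocknorm_ge0.
by apply: lerXn2r; rewrite // nnegrE (le_trans bj0 bj).
Qed.

Lemma blocknorm_sqr_le_forward j : (i + j < m)%N -> bn (i + j) ^+ 2 <= r ^+ 2 * L ^+ j.
Proof.
move=> ijm; apply: (geometric_growth (s := fun j => bn (i + j) ^+ 2) (J := m.-1 - i)).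
- exact: sqr_ge0.
- exact: growth_factor_ge1.
- by rewrite addn0 sqr_le_r.
- by rewrite addn1 sqr_le_r.
- by move=> j' jJ; rewrite !addnS blocknorm_growth_up //; lia.
- lia.
Qed.

Lemma blocknorm_sqr_le_backward j : (j <= i.+1)%N -> bn (i.+1 - j) ^+ 2 <= r ^+ 2 * L ^+ j.
Proof.
apply: (geometric_growth (s := fun j => bn (i.+1 - j) ^+ 2)).
- exact: sqr_ge0.
- exact: growth_factor_ge1.
- by rewrite subn0 sqr_le_r.
- by rewrite subn1 sqr_le_r.
move=> j' jJ; rewrite (maxC (bn (i.+1 - j') ^+ 2)).
have [-> ->] : (i.+1 - j' = (i.+1 - j'.+2).+2 /\ i.+1 - j'.+1 = (i.+1 - j'.+2).+1)%N by lia.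
by rewrite blocknorm_growth_down //; lia.
Qed.

Lemma blocknorm_sqr_le_all k : (k < m)%N -> bn k ^+ 2 <= r ^+ 2 * L ^+ m.
Proof.
move=> km; have mono j : (j <= m)%N -> r ^+ 2 * L ^+ j <= r ^+ 2 * L ^+ m.
  by move=> jm; rewrite ler_wpM2l ?sqr_ge0 // ler_weXn2l // growth_factor_ge1.
have [ik|ki] := leqP i k.
  by rewrite -(subnKC ik) (le_trans (blocknorm_sqr_le_forward _)) ?subnKC ?mono //; lia.
have ik : k = (i.+1 - (i.+1 - k))%N by lia.
by rewrite ik (le_trans (blocknorm_sqr_le_backward _)) ?mono //; lia.
Qed.

Lemma vnorm_sqr_le_of_small_pair : vnorm v ^+ 2 <= m%:R * (r ^+ 2 * L ^+ m).
Proof.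
rewrite (vnorm_sqr_blocks b_gt0 v nE).
apply: le_trans (ler_sum _ (fun (k : 'I_m) _ => blocknorm_sqr_le_all (ltn_ord k))) _.
by rewrite sumr_const card_ord mulr_natl.
Qed.

End SmallPair.

End ResidualPropagation.

Lemma sqr_eps_growth_lt1 (R : rcfType) (K : R) (b m : nat) :
  3 * (1 + 2 * K ^+ 2) < b%:R -> (0 < m)%N ->
  m%:R * ((b%:R ^- (10 * m) / Num.sqrt m%:R) ^+ 2 * growth_factor K b ^+ m) < 1.
Proof.
move=> cb m_gt0; set B : R := b%:R; set L := growth_factor K b.
have c0 : 0 <= 3 * (1 + 2 * K ^+ 2) :> R by have := sqr_ge0 K; lra.
have b_gt0 : (0 < b)%N by rewrite -(ltr0n R) (le_lt_trans c0 cb).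
have B1 : 1 <= B by rewrite ler1n.
have B_gt0 : 0 < B := lt_le_trans ltr01 B1.
have LB : L < B ^+ 20.
  apply: (@lt_le_trans _ _ (B * B ^+ 10)).
    by rewrite /L /growth_factor ltr_pM2r // exprn_gt0.
  by rewrite -exprS ler_weXn2l.
have -> : (B ^- (10 * m) / Num.sqrt m%:R) ^+ 2 = ((B ^+ 20) ^+ m)^-1 / m%:R.
  by rewrite expr_div_n sqr_sqrtr ?ler0n // exprVn -!exprM mulnAC.
have -> : m%:R * (((B ^+ 20) ^+ m)^-1 / m%:R * L ^+ m) = L ^+ m / (B ^+ 20) ^+ m.
  by field; rewrite pnatr_eq0 -lt0n m_gt0 !expf_neq0 // gt_eqF.
rewrite ltr_pdivrMr ?exprn_gt0 // mul1r ltrXn2r -?lt0n //.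
exact: le_trans ler01 (growth_factor_ge1 K b_gt0).
Qed.

Theorem proposition2p7 (R : realType) :
  exists m0 : nat,
  forall (b : nat -> nat), (forall n, (b n %| n)%N) ->
  forall (K : R) (z : R[i]), 0 < K ->
  exists N : nat, forall n : nat, (N <= n)%N ->
    let m := (n %/ b n)%N in
    (m0 <= m)%N -> (m <= b n)%N ->
    forall D T U : nat -> 'M[R[i]]_(b n),
    event_EK m K z D T U ->
    let eps := ((b n)%:R) ^- (10 * m) / Num.sqrt (m%:R) : R in
    forall v : 'cV[R[i]]_n,
      vnorm v = 1 ->
      vnorm ((Xmat m n D T U - z%:M) *m v) <= eps ->
      forall i : nat, (i.+1 < m)%N ->
        eps <= blocknorm (b n) v i \/ eps <= blocknorm (b n) v i.+1.
Proof.
exists 1%N => b b_dvd K z _.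
have [k0 c_lt_k0] : exists k0 : nat, 3 * (1 + 2 * K ^+ 2) < k0%:R.
  by exists (Num.bound (3 * (1 + 2 * K ^+ 2))); apply: archi_boundP; have := sqr_ge0 K; lra.
exists (k0 * k0)%N => n n_ge m _ m_le D T U EK eps v v1 res i im.
have b_gt0 : (0 < b n)%N by move: im; rewrite /m lt0n; case: eqP => // ->; rewrite divn0.
have nE : n = (m * b n)%N by rewrite divnK.
have k0_le : (k0 <= b n)%N by nia. (* n = m * b n <= (b n)^2 *)
have [|lt_i] := leP eps (blocknorm (b n) v i); first by left.
have [|lt_i1] := leP eps (blocknorm (b n) v i.+1); first by right.
have := vnorm_sqr_le_of_small_pair b_gt0 nE EK res im (ltW lt_i) (ltW lt_i1).
rewrite v1 expr1n => v_le.
have : m%:R * (eps ^+ 2 * growth_factor K (b n) ^+ m) < 1.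
  apply: sqr_eps_growth_lt1; last by rewrite (ltn_trans _ im).
  by rewrite (lt_le_trans c_lt_k0) // ler_nat.
by rewrite ltNge v_le.
Qed.
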